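(* Suppose that $\mathcal R$ is strictly monotone, i.e., for $Z,Z'\in L_p(\Omega,\mathcal F,P)$ with $Z'\succ Z$ one has $\mathcal R(Z')>\mathcal R(Z)$. Then for every $A\in\mathcal F$ with $P(A)>0$ there exists $\varepsilon>0$ such that $Q(A)\ge\varepsilon$ for every $Q\in\mathfrak M$.
   Context: Let $(\Omega,\mathcal F,P)$ be a probability space, $p\in[1,\infty)$, $1/p+1/q=1$. Let $\mathfrak M$ be a nonempty set of probability measures $Q\ll P$ on $(\Omega,\mathcal F)$ such that the set of densities $\mathfrak A=\{dQ/dP: Q\in\mathfrak M\}\subset L_q(\Omega,\mathcal F,P)$ is convex, bounded in $\|\cdot\|_q$, and closed in the weak$^*$ topology $\sigma(L_q,L_p)$. Define $\mathcal R(Z)=\sup_{Q\in\mathfrak M}\mathbb E_Q[Z]$ for $Z\in L_p(\Omega,\mathcal F,P)$. Notation: $Z'\succ Z$ means $Z'\ge Z$ $P$-a.s. and $P\{Z'>Z\}>0$. *)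

From HB Require Import structures.
From mathcomp Require Import all_boot all_order all_algebra.
From mathcomp Require Import all_classical all_reals all_analysis.
Set Implicit Arguments. Unset Strict Implicit. Unset Printing Implicit Defensive.
Import Order.TTheory GRing.Theory Num.Theory.
Local Open Scope classical_set_scope.
Local Open Scope ring_scope.

Definition conj_exp (R : realType) (p : R) : \bar R :=
  if p == 1 then +oo%E else (p / (p - 1))%:E.

Definition inL d (T : measurableType d) (R : realType)
  (P : probability T R) (r : \bar R) (f : T -> R) : Prop :=
  f \in Lfun P r.

(* membership up to P-a.e. equality (elements of L_q are classes) *)
Definition ae_mem d (T : measurableType d) (R : realType)
  (P : probability T R) (A : set (T -> R)) (f : T -> R) : Prop :=
  exists g, A g /\ (f = g %[ae P]).

Definition density_set d (T : measurableType d) (R : realType)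
  (P : probability T R) (A : set (T -> R)) : Prop :=
  forall z, A z ->
    measurable_fun setT z /\ (forall x, 0 <= z x) /\
    (\int[P]_x (z x)%:E = 1)%E.

Definition convex_ae d (T : measurableType d) (R : realType)
  (P : probability T R) (A : set (T -> R)) : Prop :=
  forall z1 z2 (t : R), A z1 -> A z2 -> 0 <= t <= 1 ->
    ae_mem P A (fun x => t * z1 x + (1 - t) * z2 x).

Definition bounded_Lq d (T : measurableType d) (R : realType)
  (P : probability T R) (q : \bar R) (A : set (T -> R)) : Prop :=
  exists C : R, forall z, A z -> (Lnorm P q (EFin \o z) <= C%:E)%E.

(* closed in the weak* topology sigma(L_q, L_p): every element of L_q all of
   whose basic weak* neighbourhoods
     { eta : |E[(zeta - eta) Z_i]| < e, i < n }, Z_i in L_p, e > 0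
   meet A belongs to A (as an L_q class). *)
Definition weakstar_closed d (T : measurableType d) (R : realType)
  (P : probability T R) (p q : \bar R) (A : set (T -> R)) : Prop :=
  forall z, inL P q z ->
    (forall (n : nat) (Zs : 'I_n -> T -> R) (e : R), 0 < e ->
       (forall i, inL P p (Zs i)) ->
       exists eta, A eta /\
         forall i, (`| \int[P]_x ((z x - eta x) * Zs i x)%:E | < e%:E)%E) ->
    ae_mem P A z.

(* R(Z) = sup_{Q in M} E_Q[Z] = sup_{zeta in A} E_P[zeta Z] *)
Definition riskR d (T : measurableType d) (R : realType)
  (P : probability T R) (A : set (T -> R)) (Z : T -> R) : \bar R :=
  ereal_sup [set (\int[P]_x (z x * Z x)%:E)%E | z in A].

(* Q(B) for the measure Q with density z *)
Definition Qmeas d (T : measurableType d) (R : realType)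
  (P : probability T R) (z : T -> R) (B : set T) : \bar R :=
  (\int[P]_(x in B) (z x)%:E)%E.

Definition strictly_monotone d (T : measurableType d) (R : realType)
  (P : probability T R) (p : \bar R) (A : set (T -> R)) : Prop :=
  forall Z Z', inL P p Z -> inL P p Z' ->
    {ae P, forall x, (Z x <= Z' x)%R} ->
    (0 < P [set x | (Z x < Z' x)%R])%E ->
    (riskR P A Z < riskR P A Z')%E.

From HB Require Import structures.
From mathcomp Require Import all_boot all_order all_algebra.
From mathcomp Require Import all_classical all_reals all_analysis.
Set Implicit Arguments. Unset Strict Implicit. Unset Printing Implicit Defensive.
Import Order.TTheory GRing.Theory Num.Theory.
Local Open Scope classical_set_scope.
Local Open Scope ring_scope.

(* Compare Z := -1_B with Z' := 0: we have Z <= Z' everywhere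
   and {Z < Z'} = B has positive probability, so strict monotonicity gives
     R(-1_B) < R(0) <= 0.
   Since E_P[zeta (-1_B)] = -Q_zeta(B) for every density zeta, the supremum
   R(-1_B) of these numbers is a real number -eps < 0 (or -oo), and then
   Q_zeta(B) >= eps for all zeta in the set of densities. *)

Lemma negindic_Lfun (d : measure_display) (T : measurableType d)
  (R : realType) (P : probability T R) (p : R) (B : set T) :
  1 <= p -> measurable B -> inL P p%:E (fun x => - (\1_B x : R)).
Proof.
move=> p1 mB.
have mZ : measurable_fun setT (fun x => - (\1_B x : R)).
  by apply: measurableT_comp => //; exact: measurable_indic.
rewrite /inL inE; apply/andP; split; rewrite inE //=.
rewrite /finite_norm unlock /Lnorm poweR_lty //.
have p_neq0 : p != 0 by apply: lt0r_neq0; apply: lt_le_trans p1.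
have -> : (fun x => (`|- (\1_B x : R)| `^ p)%:E) = (fun x => (\1_B x : R)%:E).
  apply/funext => x; rewrite indicE.
  by case: (x \in B); rewrite ?normrN ?normr1 ?normr0 ?powR1 ?powR0.
rewrite integral_indic // setIT.
by apply: le_lt_trans (probability_le1 _ mB) _; rewrite ltry.
Qed.

Lemma expectation_negindic (d : measure_display) (T : measurableType d)
  (R : realType) (P : probability T R) (z : T -> R) (B : set T) :
  (forall x, 0 <= z x) ->
  (\int[P]_x (z x * - (\1_B x : R))%:E = - Qmeas P z B)%E.
Proof.
move=> z_ge0; rewrite /Qmeas -integral_ge0N; last by move=> x _; rewrite lee_fin.
rewrite [RHS]integral_mkcond; apply: eq_integral => x _; rewrite patchE indicE.
by case: ifP => _; rewrite /= ?mulrN1 ?oppr0 ?mulr0 ?oppe0 ?EFinN.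
Qed.

Lemma riskR_cst0_le0 (d : measure_display) (T : measurableType d)
  (R : realType) (P : probability T R) (A : set (T -> R)) :
  (riskR P A (cst 0%R) <= 0)%E.
Proof.
apply: ge_ereal_sup => _ [z Az <-].
by under eq_integral => x _ do rewrite /= mulr0; rewrite integral0.
Qed.

(* Strict monotonicity applied to -1_B <= 0, whose strict set is B. *)
Lemma riskR_negindic_lt0 (d : measure_display) (T : measurableType d)
  (R : realType) (P : probability T R) (p : R) (A : set (T -> R)) (B : set T) :
  1 <= p -> strictly_monotone P p%:E A -> measurable B -> (0 < P B)%E ->
  (riskR P A (fun x => (- (\1_B x : R))%R) < 0)%E.
Proof.
move=> p1 smA mB PB_gt0.
have le_ae : {ae P, forall x, - (\1_B x : R) <= cst 0%R x}.
  by apply: aeW => x /=; rewrite oppr_le0 indicE ler0n.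
have strict_set : [set x | - (\1_B x : R) < cst 0%R x] = B.
  apply/seteqP; split => x /=; rewrite indicE oppr_lt0.
    by case: (boolP (x \in B)) => [/set_mem //|_]; rewrite ltxx.
  by move=> Bx; rewrite mem_set.
have risk_lt : (riskR P A (fun x => (- (\1_B x : R))%R) < riskR P A (cst 0%R))%E.
  apply: smA; [exact: negindic_Lfun | exact: Lfun_cst | exact: le_ae |].
  by rewrite strict_set.
by apply: (lt_le_trans risk_lt); exact: riskR_cst0_le0.
Qed.

Lemma ereal_lt0_bound (R : realType) (x : \bar R) :
  (x < 0)%E -> exists r : R, (x <= r%:E)%E /\ r < 0.
Proof.
case: x => [r| |] //; first by rewrite lte_fin => r_lt0; exists r.
by move=> _; exists (-1); split; [exact: leNye | rewrite ltrN10].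
Qed.

Theorem proposition3p8 (d : measure_display) (T : measurableType d)
  (R : realType) (P : probability T R) (p : R) (A : set (T -> R)) :
  1 <= p ->
  A !=set0 ->
  density_set P A ->
  (forall z, A z -> inL P (conj_exp p) z) ->
  convex_ae P A ->
  bounded_Lq P (conj_exp p) A ->
  weakstar_closed P p%:E (conj_exp p) A ->
  strictly_monotone P p%:E A ->
  forall B : set T, measurable B -> (0 < P B)%E ->
    exists eps : R, 0 < eps /\
      forall z, A z -> (eps%:E <= Qmeas P z B)%E.
Proof.
move=> p1 _ densA _ _ _ _ smA B mB PB_gt0.
have [r [risk_le_r r_lt0]] :=
  ereal_lt0_bound (riskR_negindic_lt0 p1 smA mB PB_gt0).
exists (- r); split; first by rewrite oppr_gt0.
move=> z Az.
have z_ge0 : forall x, 0 <= z x by have [_ []] := densA z Az.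
have pairing_le_risk :
    (\int[P]_x (z x * - (\1_B x : R))%:E <= riskR P A (fun x => (- (\1_B x : R))%R))%E.
  by apply: ereal_sup_ubound; exists z.
move: (le_trans pairing_le_risk risk_le_r).
by rewrite expectation_negindic // EFinN leeNl.
Qed.
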